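(* Let $S=\{R_0,R_1,\ldots,R_d\}$ be a quasi-thin scheme on $X$, let $\mathbb{F}$ be a field and $x\in X$, and let $\mathcal{T}=\mathcal{T}(x)$ be the Terwilliger $\mathbb{F}$-algebra of $S$ with respect to $x$. Then $$\dim_{\mathbb{F}}\mathcal{T}=(d+1)^2+\bigl|\{(a,b): R_a,R_b\in S,\ |R_{a'}R_b|=2\}\bigr|+\bigl|\{(c,e): R_c,R_e\in S,\ (c,e)\text{ is a bad pair of }S\}\bigr|.$$
   Context: Let $\mathbb{F}$ be a field of characteristic $p$ ($p=0$ or a prime) and $X$ a nonempty finite set. A scheme (association scheme) of class $d$ on $X$ is a partition $S=\{R_0,\dots,R_d\}$ of $X\times X$ into nonempty sets such that $R_0=\{(b,b):b\in X\}$; for each $c$ there is $c'$ with $R_{c'}=\{(f,e):(e,f)\in R_c\}$; and for all $i,j,k$ the intersection number $p_{ij}^k=|\{\ell\in X:(m,\ell)\in R_i,(\ell,n)\in R_j\}|$ does not depend on the choice of $(m,n)\in R_k$. The valency of $R_a$ is $k_a=p_{aa'}^0$. The complex product of $R_a,R_b$ is $R_aR_b=\{R_c\in S:p_{ab}^c>0\}$. $S$ is quasi-thin if $k_a\le 2$ for all $a$. For $y\in X$, $yR_a=\{z\in X:(y,z)\in R_a\}$. $M_X(\mathbb F)$ denotes the $\mathbb F$-matrices with rows and columns indexed by $X$; $E_{uv}$ is the matrix unit at $(u,v)$. $A_a$ is the $(0,1)$ adjacency matrix of $R_a$, and $E_a^*(y)=\sum_{i\in yR_a}E_{ii}$. The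 Terwilliger $\mathbb F$-algebra $\mathcal T(y)$ is the $\mathbb F$-subalgebra of $M_X(\mathbb F)$ generated by $A_0,\dots,A_d,E_0^*(y),\dots,E_d^*(y)$. Bad pair: for $R_u,R_v\in S$, $(u,v)$ is a bad pair of $S$ if there exist an integer $a\ge 1$ and $R_{i_b},R_{j_b},R_{\ell_b}\in S$ for $b=0,\dots,a$ such that $i_0=u$, $\ell_a=v$, $k_{i_b}=k_{\ell_b}=2$ and $p_{i_bj_b}^{\ell_b}=1$ for all $b\in\{0,\dots,a\}$, $\ell_c=i_{c+1}$ for all $c\in\{0,\dots,a-1\}$, and $|R_{u'}R_v|=1$. *)

From HB Require Import structures.
From mathcomp Require Import all_boot all_order all_algebra.
Set Implicit Arguments. Unset Strict Implicit. Unset Printing Implicit Defensive.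
Import GRing.Theory.

(* A "scheme" of class d on a finite set X is encoded by the map
   r : X -> X -> 'I_d.+1, with R_a = [set (x,y) | r x y == a]. *)
Section Scheme.
Variables (X : finType) (d : nat) (r : X -> X -> 'I_d.+1).

Definition is_scheme : Prop :=
  [/\
      (forall a : 'I_d.+1, exists x y, r x y = a),
      (forall x y, (r x y == ord0) = (x == y)),
      (forall c : 'I_d.+1, exists c' : 'I_d.+1, forall x y, r y x = c' <-> r x y = c) &
      (forall i j k : 'I_d.+1, exists p : nat, forall m n, r m n = k ->
          #|[set l | (r m l == i) && (r l n == j)]| = p)].

(* p_{ij}^k, computed at some pair (m,n) in R_k (well defined for schemes) *)
Definition pnum (i j k : 'I_d.+1) : nat :=
  match [pick mn : X * X | r mn.1 mn.2 == k] with
  | Some mn => #|[set l | (r mn.1 l == i) && (r l mn.2 == j)]|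
  | None => 0
  end.

(* the index c' of the transpose of R_c *)
Definition trI (c : 'I_d.+1) : 'I_d.+1 :=
  match [pick xy : X * X | r xy.1 xy.2 == c] with
  | Some xy => r xy.2 xy.1
  | None => c
  end.

Definition valency (a : 'I_d.+1) : nat := pnum a (trI a) ord0.

Definition quasi_thin : Prop := forall a, valency a <= 2.

(* complex product R_a R_b = {R_c | p_{ab}^c > 0} *)
Definition cprod (a b : 'I_d.+1) : {set 'I_d.+1} := [set c | 0 < pnum a b c].

Definition bad_pair (u v : 'I_d.+1) : Prop :=
  exists (a : nat) (i j l : nat -> 'I_d.+1),
    [/\ 1 <= a, i 0 = u /\ l a = v,
        (forall b, b <= a ->
           [/\ valency (i b) = 2, valency (l b) = 2 & pnum (i b) (j b) (l b) = 1]),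
        (forall c, c < a -> l c = i c.+1) &
        #|cprod (trI u) v| = 1].

(* matrices in M_X(F), rows/columns indexed by X via enum_rank *)
Variable F : fieldType.
Local Open Scope ring_scope.

Definition adjA (a : 'I_d.+1) : 'M[F]_#|X| :=
  \matrix_(i, j) ((r (enum_val i) (enum_val j) == a)%:R).

Definition dualE (y : X) (a : 'I_d.+1) : 'M[F]_#|X| :=
  \matrix_(i, j) (((i == j) && (r y (enum_val i) == a))%:R).

Definition is_subalgebra (W : {vspace 'M[F]_#|X|}) : Prop :=
  (1%:M \in W) /\ (forall u v, u \in W -> v \in W -> u *m v \in W).

Definition is_terwilliger_algebra (y : X) (U : {vspace 'M[F]_#|X|}) : Prop :=
  [/\ is_subalgebra U,
      (forall a, adjA a \in U),
      (forall a, dualE y a \in U) &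
      (forall W, is_subalgebra W -> (forall a, adjA a \in W) ->
         (forall a, dualE y a \in W) -> (U <= W)%VS)].

End Scheme.

From mathcomp Require Import all_boot all_order all_algebra.
From mathcomp Require Import zify.
Import GRing.Theory.
Set Implicit Arguments. Unset Strict Implicit. Unset Printing Implicit Defensive.

(* Fix x and write X_a = xR_a.  Quasi-thinness makes every cell X_a a set of
   one or two points; fixing a base point in each cell gives every point a bit
   [flip].  Counting paths shows that r is circulant on each block X_a * X_b:
   r y z depends only on a, b and flip y + flip z.  Hence r is constant on the
   block or takes exactly two values there, and the latter happens iff
   |R_{a'}R_b| = 2, in which case a and b are called linked.  Let [comp] be the
   equivalence relation generated by the links between two-point cells.

   Cut X * X into pieces: the blocks X_a * X_b, each split into its two parity
   classes when comp a b.  The matrices that are constant on the pieces are the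
   ones invariant under swapping the two points of every cell in a union of
   comp-classes, so they form an algebra; it contains all A_c and E*_c, hence
   T.  Conversely T contains each block E*_a (sum_c A_c) E*_b, the even part
   E*_a of a diagonal block, and multiplying by E*_b A_c E*_b' moves an even
   part along a link; so T contains every piece.  There are (d+1)^2 pieces plus
   one per pair in the same component, and these pairs are the linked pairs and
   the bad pairs. *)

Lemma sum_mul_invariant (T : finType) (R : pzSemiRingType) (s : T -> T)
    (f g : T -> T -> R) : bijective s ->
  (forall y z, f (s y) (s z) = f y z) -> (forall y z, g (s y) (s z) = g y z) ->
  forall y z, (\sum_w f (s y) w * g w (s z) = \sum_w f y w * g w z)%R.
Proof.
move=> s_bij sf sg y z; rewrite (reindex s) /=; last exact: onW_bij.
by apply: eq_bigr => w _; rewrite sf sg.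
Qed.

Section Scheme.
Variables (X : finType) (d : nat) (r : X -> X -> 'I_d.+1).
Hypothesis r_scheme : is_scheme r.

Lemma r_eq0 y z : (r y z == ord0) = (y == z).
Proof. by case: r_scheme. Qed.

Lemma r_trI c y z : r z y = trI r c <-> r y z = c.
Proof.
case: r_scheme => r_onto _ r_tr _; have [c' c'E] := r_tr c.
suff -> : trI r c = c' by [].
rewrite /trI; case: pickP => [[m n] /= /eqP mnc | no_c].
  by apply/c'E; rewrite mnc.
by have [m [n mnc]] := r_onto c; have := no_c (m, n); rewrite /= mnc eqxx.
Qed.

Lemma card_paths_const i j m n m' n' : r m n = r m' n' ->
  #|[set l | (r m l == i) && (r l n == j)]| =
  #|[set l | (r m' l == i) && (r l n' == j)]|.
Proof.
case: r_scheme => _ _ _ /(_ i j (r m n)) [p pE] rmn.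
by rewrite pE // pE.
Qed.

Lemma pnumE i j m n :
  pnum r i j (r m n) = #|[set l | (r m l == i) && (r l n == j)]|.
Proof.
rewrite /pnum; case: pickP => [[m' n'] /= /eqP rmn | no_mn].
  exact: card_paths_const.
by have := no_mn (m, n); rewrite /= eqxx.
Qed.

Section QuasiThin.
Variable x : X.
Hypothesis r_quasi_thin : quasi_thin r.

Definition cell a := [set y | r x y == a].

Lemma card_cell a : #|cell a| = valency r a.
Proof.
have rxx : r x x = ord0 by apply/eqP; rewrite r_eq0.
rewrite /valency -rxx pnumE; apply: eq_card => y; rewrite !inE.
by case: eqP => // rxy; apply/esym/eqP/r_trI.
Qed.

Lemma card_cell_gt0 a : 0 < #|cell a|.
Proof.
case: r_scheme => r_onto _ _ _; have [y [z ryz]] := r_onto a.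
have ryy : r y y = ord0 by apply/eqP; rewrite r_eq0.
rewrite card_cell /valency -ryy pnumE; apply/card_gt0P; exists z.
by rewrite inE ryz eqxx; apply/eqP/r_trI.
Qed.

Lemma card_cell_le2 a : #|cell a| <= 2.
Proof. by rewrite card_cell. Qed.

Lemma card_cell_col a c z z' : r x z = r x z' ->
  #|[set y | (r x y == a) && (r y z == c)]| =
  #|[set y | (r x y == a) && (r y z' == c)]|.
Proof. exact: card_paths_const. Qed.

Lemma card_cell_row b c y y' : r x y = r x y' ->
  #|[set z | (r x z == b) && (r y z == c)]| =
  #|[set z | (r x z == b) && (r y' z == c)]|.
Proof.
have tr w : #|[set z | (r x z == b) && (r w z == c)]| =
            #|[set z | (r x z == b) && (r z w == trI r c)]|.
  by apply: eq_card => z; rewrite !inE; congr (_ && _); apply/eqP/eqP => /r_trI.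
by move=> rxy; rewrite !tr; apply: card_paths_const.
Qed.

Definition double a := #|cell a| == 2.

Lemma cell_single_eq a y y' : ~~ double a -> r x y = a -> r x y' = a -> y = y'.
Proof.
move=> single rxy rxy'; have /card_le1_eqP : #|cell a| <= 1.
  by move: single (card_cell_gt0 a) (card_cell_le2 a); rewrite /double; lia.
by apply; rewrite inE ?rxy ?rxy'.
Qed.

Definition base a := odflt x [pick y | r x y == a].

Lemma base_cell a : r x (base a) = a.
Proof.
rewrite /base; case: pickP => [y /eqP // | no_y].
by have /card_gt0P [y] := card_cell_gt0 a; rewrite inE no_y.
Qed.

Definition flip y := y != base (r x y).

Lemma flip_base a : flip (base a) = false.
Proof. by rewrite /flip base_cell eqxx. Qed.

Lemma flip_single y : ~~ double (r x y) -> flip y = false.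
Proof. by move=> single; apply/negbTE/negPn/eqP/(cell_single_eq single erefl (base_cell _)). Qed.

Lemma cell_inj y y' : r x y = r x y' -> flip y = flip y' -> y = y'.
Proof.
rewrite /flip => rxy; case: (eqVneq y) => [-> | y_nb]; rewrite -rxy.
  by case: eqP.
case: (eqVneq y') => // y'_nb _.
have /card_le1_eqP : #|cell (r x y) :\ base (r x y)| <= 1.
  by have := card_cell_le2 (r x y); rewrite (cardsD1 (base (r x y))) inE base_cell eqxx.
by apply; rewrite !inE ?y_nb ?y'_nb -?rxy eqxx.
Qed.

Lemma cell_eqE y y' : r x y = r x y' -> (y == y') = (flip y == flip y').
Proof. by move=> rxy; apply/eqP/eqP => [-> | /(cell_inj rxy)]. Qed.

Lemma double_of_neq y y' : r x y = r x y' -> y != y' -> double (r x y).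
Proof.
move=> rxy; apply: contraNT => single.
by apply/eqP/(cell_single_eq single erefl); rewrite rxy.
Qed.

Definition partner w := odflt w [pick u | (r x u == r x w) && (flip u != flip w)].

Lemma partner_cell w : r x (partner w) = r x w.
Proof. by rewrite /partner; case: pickP => [u /andP [/eqP] | ]. Qed.

Lemma flip_partner w : double (r x w) -> flip (partner w) = ~~ flip w.
Proof.
move=> dbl; rewrite /partner; case: pickP => [u /andP [_] | no_u].
  by case: (flip u); case: (flip w).
have : 0 < #|cell (r x w) :\ w| by move: dbl; rewrite /double (cardsD1 w) inE eqxx; lia.
case/card_gt0P => u; rewrite !inE => /andP [u_w /eqP rxu].
by have := no_u u; rewrite rxu eqxx -(cell_eqE rxu) u_w.
Qed.

Lemma partner_single w : ~~ double (r x w) -> partner w = w.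
Proof. by move=> single; apply: cell_single_eq single (partner_cell w) erefl. Qed.

Lemma partner_neq w : (partner w != w) = double (r x w).
Proof.
have [dbl | single] := boolP (double (r x w)); last by rewrite partner_single ?eqxx.
by rewrite (cell_eqE (partner_cell w)) flip_partner //; case: (flip w).
Qed.

Lemma partnerK : involutive partner.
Proof.
move=> w; have [dbl | single] := boolP (double (r x w)).
  by apply: cell_inj; rewrite ?partner_cell // !flip_partner ?partner_cell ?negbK.
by rewrite !partner_single ?partner_cell.
Qed.

Lemma partner_of_neq y y' : r x y = r x y' -> y != y' -> partner y = y'.
Proof.
move=> rxy y_y'; apply: cell_inj; first by rewrite partner_cell.
have dbl := double_of_neq rxy y_y'.
move: y_y'; rewrite (cell_eqE rxy) flip_partner //.
by case: (flip y); case: (flip y').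
Qed.

Lemma card_cell_pred a y (P : pred X) : r x y = a ->
  #|[set u | (r x u == a) && P u]| = P y + (double a && P (partner y)).
Proof.
move=> rxy; rewrite (cardsD1 y) inE rxy eqxx /=; congr (_ + _).
rewrite (cardsD1 (partner y)) !inE partner_neq partner_cell rxy eqxx /=.
rewrite (_ : _ :\ _ = set0) ?cards0 ?addn0 //; apply/setP => u; rewrite !inE.
case: (eqVneq u (partner y)) => //= u_py; case: (eqVneq u y) => //= u_y.
case: (eqVneq (r x u) a) => //= rxu.
by rewrite -(@partner_of_neq y u) ?eqxx ?rxy ?rxu // eq_sym in u_py.
Qed.

Lemma r_partner y z : double (r x y) -> double (r x z) ->
  r (partner y) (partner z) = r y z.
Proof.
move=> dy dz; set c := r y z.
(* Compare the column counts at z, partner z with the row counts at y, partner y. *)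
have col := card_cell_col (r x y) c (esym (partner_cell z)).
have row := card_cell_row (r x z) c (esym (partner_cell y)).
rewrite !(card_cell_pred (fun u => r u _ == c) erefl) dy /= in col.
rewrite !(card_cell_pred (fun u => r _ u == c) erefl) dz /= in row.
move: col row; rewrite eqxx.
by case: (r (partner y) z == c); case: (r y (partner z) == c);
  case: (eqVneq (r (partner y) (partner z)) c) => //=; lia.
Qed.

Lemma r_parity y y' z z' : r x y = r x y' -> r x z = r x z' ->
  flip y (+) flip z = flip y' (+) flip z' -> r y z = r y' z'.
Proof.
move=> rxy rxz par; case: (eqVneq y y') par => [<- | y_y'] par.
  have -> // : z = z'.
  by apply: cell_inj rxz _; move: par; case: (flip y); case: (flip z); case: (flip z').
have dy := double_of_neq rxy y_y'.
rewrite -(partner_of_neq rxy y_y') flip_partner // in par *.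
have z_z' : z != z'.
  by rewrite (cell_eqE rxz); move: par; case: (flip y); case: (flip z); case: (flip z').
by rewrite -(partner_of_neq rxz z_z') r_partner // (double_of_neq rxz z_z').
Qed.

Lemma r_single_const y y' z z' : ~~ double (r x y) || ~~ double (r x z) ->
  r x y = r x y' -> r x z = r x z' -> r y z = r y' z'.
Proof.
move=> /orP [single | single] rxy rxz.
  rewrite -(cell_single_eq single erefl (esym rxy)).
  have := card_cell_col (r x y) (r y z) rxz.
  rewrite !(card_cell_pred (fun u => r u _ == _) erefl) (negbTE single) eqxx !addn0.
  by case: eqP.
rewrite -(cell_single_eq single erefl (esym rxz)).
have := card_cell_row (r x z) (r y z) rxy.
rewrite !(card_cell_pred (fun u => r _ u == _) erefl) (negbTE single) eqxx !addn0.
by case: eqP.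
Qed.

Definition link a b := [exists y, exists y', exists z, exists z',
  [&& r x y == a, r x y' == a, r x z == b, r x z' == b & r y z != r y' z']].

Lemma link_intro y y' z z' : r x y = r x y' -> r x z = r x z' ->
  r y z != r y' z' -> link (r x y) (r x z).
Proof.
move=> rxy rxz neq; apply/existsP; exists y; apply/existsP; exists y'.
by apply/existsP; exists z; apply/existsP; exists z'; rewrite rxy rxz !eqxx neq.
Qed.

Lemma nlink_const y y' z z' : ~~ link (r x y) (r x z) ->
  r x y = r x y' -> r x z = r x z' -> r y z = r y' z'.
Proof. by move=> nlink rxy rxz; apply/eqP; apply: contraNT nlink; apply: link_intro. Qed.

Lemma link_double a b : link a b -> double a && double b.
Proof.
move=> /existsP [y /existsP [y' /existsP [z /existsP [z']]]].
case/and5P => /eqP <- /eqP rxy' /eqP <- /eqP rxz'; apply: contraR => single.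
by apply/eqP/r_single_const; rewrite -?negb_and ?rxy' ?rxz'.
Qed.

Lemma link_sym : symmetric link.
Proof.
suff imp a b : link a b -> link b a by move=> a b; apply/idP/idP => /imp.
move=> /existsP [y /existsP [y' /existsP [z /existsP [z']]]].
case/and5P => /eqP <- /eqP rxy' /eqP <- /eqP rxz' neq.
apply: (link_intro (y' := z') (z' := y')); rewrite ?rxy' ?rxz' //.
apply: contra neq => /eqP tr; apply/eqP.
by apply/(r_trI (r y' z')); rewrite tr; apply/r_trI.
Qed.

Lemma link_refl a : double a -> link a a.
Proof.
move=> da; have := @link_intro (base a) (partner (base a)) (base a) (base a).
rewrite partner_cell base_cell; apply=> //.
have rbb : r (base a) (base a) = ord0 by apply/eqP; rewrite r_eq0.
by rewrite rbb eq_sym r_eq0 partner_neq base_cell.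
Qed.

Lemma link_parityE y y' z z' : link (r x y) (r x z) -> r x y = r x y' -> r x z = r x z' ->
  (r y z == r y' z') = (flip y (+) flip z == flip y' (+) flip z').
Proof.
move=> lk rxy rxz; apply/eqP/eqP => [eq_r | /(r_parity rxy rxz) //].
move: lk; apply: contraTeq => npar; apply/negP.
have const u w : r x u = r x y -> r x w = r x z -> r u w = r y z.
  move=> rxu rxw; case: (eqVneq (flip u (+) flip w) (flip y (+) flip z)) => par.
    exact: r_parity.
  rewrite eq_r; apply: r_parity; rewrite -?rxy -?rxz //; move: par npar.
  by case: (flip u (+) flip w); case: (flip y (+) flip z); case: (flip y' (+) flip z').
case/existsP => u /existsP [u' /existsP [w /existsP [w']]].
case/and5P => /eqP rxu /eqP rxu' /eqP rxw /eqP rxw'.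
by rewrite (const u w) // (const u' w') // eqxx.
Qed.

Lemma link_base a b : link a b -> r (base a) (base b) != r (base a) (partner (base b)).
Proof.
move=> lk; have /andP [_ db] := link_double lk.
rewrite link_parityE ?partner_cell ?flip_partner ?base_cell ?flip_base //.
Qed.

Definition comp a b := double a && connect link a b.

Lemma comp_double a b : comp a b -> double a && double b.
Proof.
case/andP => da ab; rewrite da /=.
have closed_double : closed link [pred c | double c].
  by move=> u v /link_double /andP [du dv]; rewrite !inE du dv.
by have := closed_connect closed_double ab; rewrite !inE da.
Qed.

Lemma comp_refl a : double a -> comp a a.
Proof. by move=> da; rewrite /comp da connect0. Qed.

Lemma link_comp a b : link a b -> comp a b.
Proof. by move=> lk; have /andP [da _] := link_double lk; rewrite /comp da connect1. Qed.

Lemma comp_sym : symmetric comp.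
Proof.
suff imp a b : comp a b -> comp b a by move=> a b; apply/idP/idP => /imp.
move=> ab; have /andP [_ db] := comp_double ab; case/andP: ab => _ ab.
by rewrite /comp db (sym_connect_sym link_sym).
Qed.

Lemma comp_trans : transitive comp.
Proof. by move=> b a c /andP [da ab] /andP [_ bc]; rewrite /comp da (connect_trans ab bc). Qed.

Lemma cprod_trI_cells a b :
  cprod r (trI r a) b = [set r y z | y in cell a, z in cell b].
Proof.
case: (r_scheme) => r_onto _ _ _.
apply/setP => c; rewrite inE; apply/idP/imset2P => [|[y z]].
  have [m [n <-]] := r_onto c; rewrite pnumE.
  case/card_gt0P => l; rewrite inE => /andP [/eqP /r_trI rlm /eqP rln].
  have : 0 < #|[set y | (r x y == a) && (r y (base b) == r m n)]|.
    rewrite -(@card_paths_const _ _ l n) ?rln ?base_cell //.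
    by apply/card_gt0P; exists m; rewrite inE rlm !eqxx.
  case/card_gt0P => y; rewrite inE => /andP [rxy /eqP <-].
  by exists y (base b); rewrite ?inE ?base_cell.
rewrite !inE => /eqP rxy /eqP rxz ->; rewrite pnumE; apply/card_gt0P; exists x.
by rewrite inE rxz eqxx andbT; apply/eqP/r_trI.
Qed.

Lemma card_cprod_trI a b : #|cprod r (trI r a) b| = (link a b).+1.
Proof.
rewrite cprod_trI_cells; have [lk | nlk] := boolP (link a b); last first.
  rewrite -(cards1 (r (base a) (base b))); apply: eq_card => c; rewrite inE.
  apply/imset2P/eqP => [[y z] | ->]; last by exists (base a) (base b); rewrite // inE base_cell.
  rewrite !inE => /eqP rxy /eqP rxz ->.
  by apply: nlink_const; rewrite ?base_cell // rxy rxz.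
rewrite -[in RHS](link_base lk) -cards2; apply: eq_card => c; rewrite !inE.
have /andP [_ db] := link_double lk.
apply/imset2P/orP => [[y z] | ]; last first.
  by case=> /eqP ->; [exists (base a) (base b) | exists (base a) (partner (base b))];
    rewrite // inE ?partner_cell base_cell.
rewrite !inE => /eqP rxy /eqP rxz ->.
case: (boolP (flip y (+) flip z)) => par; [right | left]; apply/eqP/r_parity;
  rewrite ?partner_cell ?base_cell ?flip_partner ?flip_base ?rxy ?rxz //.
- by rewrite base_cell.
- by rewrite (negbTE par).
Qed.

Lemma pnum_base i j l :
  pnum r i j l = #|[set y | (r x y == i) && (r y (base l) == j)]|.
Proof. by rewrite -{1}(base_cell l) pnumE. Qed.

Lemma pnum_link i l : link i l -> pnum r i (r (base i) (base l)) l = 1.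
Proof.
move=> lk; have /andP [di _] := link_double lk.
rewrite pnum_base (card_cell_pred (fun y => r y _ == _) (base_cell i)) eqxx di.
by rewrite link_parityE ?partner_cell ?base_cell ?flip_partner ?flip_base // base_cell.
Qed.

Lemma link_of_pnum1 i j l : double i -> pnum r i j l = 1 -> link i l.
Proof.
move=> di; rewrite pnum_base (card_cell_pred (fun y => r y _ == _) (base_cell i)) di.
move=> p1; have := @link_intro (base i) (partner (base i)) (base l) (base l).
rewrite partner_cell !base_cell; apply=> //; apply/eqP => eq_r.
by move: p1; rewrite eq_r; case: (_ == j).
Qed.

Lemma bad_pairP u v : bad_pair r u v <-> comp u v && ~~ link u v.
Proof.
split.
  case=> n [i [j [l [n_gt0 [i0 ln] chain link_lc cprod1]]]].
  have lk b : b <= n -> link (i b) (l b).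
    move=> b_n; have [vi _ p1] := chain b b_n.
    by apply: (link_of_pnum1 _ p1); rewrite /double card_cell vi.
  have conn b : b <= n -> connect link u (l b).
    elim: b => [|b IHb] b_n; first by rewrite -i0 connect1 ?lk.
    by rewrite (connect_trans (IHb (ltnW b_n))) // link_lc // connect1 ?lk.
  have [vu _ _] := chain 0 isT.
  rewrite /comp /double card_cell -i0 vu i0 -ln conn //= ln.
  by move: cprod1; rewrite card_cprod_trI; case: link.
case/andP => /andP [du /connectP [p link_p ->]] nlink.
have p_nil : p != [::] by apply: contraNneq nlink => ->; rewrite link_refl.
(* The loop (u, u) pads the chain, which must have length at least 1. *)
pose q := u :: u :: p.
exists (size p), (nth u q), (fun k => r (base (nth u q k)) (base (nth u q k.+1))),
  (fun k => nth u q k.+1).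
split => //; first by case: (p) p_nil.
- by split=> //=; rewrite (nth_last u (u :: p)).
- move=> b b_le; have lk : link (nth u q b) (nth u q b.+1).
    by case: b b_le => [|b] b_le /=; [rewrite link_refl | apply: (pathP u link_p)].
  have /andP [d1 d2] := link_double lk.
  by rewrite -!card_cell (eqP d1) (eqP d2) pnum_link.
- by rewrite card_cprod_trI (negbTE nlink).
Qed.

Definition piece y z := (r x y, r x z, comp (r x y) (r x z) && (flip y (+) flip z)).

Lemma piece_r y z y' z' : piece y z = piece y' z' -> r y z = r y' z'.
Proof.
case=> rxy rxz par; have [lk | nlk] := boolP (link (r x y) (r x z)).
  by apply: r_parity => //; move: par; rewrite -rxy -rxz link_comp.
exact: nlink_const.
Qed.

Lemma eq_cell_flipE y z : (y == z) = (r x y == r x z) && ~~ (flip y (+) flip z).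
Proof.
case: (eqVneq (r x y) (r x z)) => [rxyz | ]; last by apply: contraNF => /eqP ->.
by rewrite (cell_eqE rxyz); case: (flip y); case: (flip z).
Qed.

Lemma piece_eq y z y' z' : piece y z = piece y' z' -> (y == z) = (y' == z').
Proof.
case=> rxy rxz par; rewrite !eq_cell_flipE -rxy -rxz.
case: (eqVneq (r x y) (r x z)) => //= rxyz.
have [dy | single] := boolP (double (r x y)).
  by move: par; rewrite -rxy -rxz -rxyz (comp_refl dy) => /= ->.
by rewrite !flip_single // -?rxy -?rxz -?rxyz.
Qed.

Definition swap (C : {set 'I_d.+1}) w := if r x w \in C then partner w else w.

Lemma swap_cell C w : r x (swap C w) = r x w.
Proof. by rewrite /swap; case: ifP => // _; rewrite partner_cell. Qed.

Lemma swapK C : involutive (swap C).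
Proof.
by move=> w; rewrite {2}/swap; case: ifP => wC; rewrite /swap ?partner_cell wC ?partnerK.
Qed.

Lemma flip_swap C w : flip (swap C w) = (r x w \in C) && double (r x w) (+) flip w.
Proof.
rewrite /swap; case: (r x w \in C) => //=.
have [dw | single] := boolP (double (r x w)); first by rewrite flip_partner.
by rewrite partner_single.
Qed.

Lemma piece_swap (C : {set 'I_d.+1}) y z : closed comp C -> piece (swap C y) (swap C z) = piece y z.
Proof.
move=> closedC; rewrite /piece !swap_cell !flip_swap; congr (_, _, _).
case: (boolP (comp (r x y) (r x z))) => //= cyz.
have /andP [dy dz] := comp_double cyz.
by rewrite dy dz !andbT (closedC _ _ cyz); case: (_ \in C); case: (flip y); case: (flip z).
Qed.

Lemma swap_witness y z y' z' : piece y z = piece y' z' ->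
  exists2 C : {set 'I_d.+1}, closed comp C & swap C y = y' /\ swap C z = z'.
Proof.
move=> eq_piece; case: (eq_piece) => rxy rxz _.
have ncomp_of_fixed u u' w w' : piece u w = piece u' w' -> u = u' -> w != w' ->
    ~~ comp (r x w) (r x u).
  move=> + uu'; rewrite -uu' => -[rxw par] ww'; apply/negP; rewrite comp_sym => cuw.
  move: par; rewrite -rxw cuw /= => /addbI flip_w.
  by rewrite (cell_inj rxw flip_w) eqxx in ww'.
pose C := [set c | (y != y') && comp (r x y) c || (z != z') && comp (r x z) c].
have closedC : closed comp C.
  move=> c c' cc'; rewrite !inE.
  have compr a : comp a c = comp a c'.
    by apply/idP/idP => ac; apply: comp_trans ac _; rewrite // comp_sym.
  by rewrite !compr.
have swap_to u u' : r x u = r x u' -> (r x u \in C) = (u != u') -> swap C u = u'.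
  move=> rxu uC; rewrite /swap uC; case: (eqVneq u u') => [-> | uu'] //.
  exact: partner_of_neq.
exists C => //; split; apply: swap_to; rewrite // inE.
- case: (eqVneq y y') => [yy' | yy'] /=; last by rewrite comp_refl ?(double_of_neq rxy).
  by case: (eqVneq z z') => //= zz'; apply/negbTE/(ncomp_of_fixed _ _ _ _ eq_piece).
- case: (eqVneq z z') => [zz' | zz'] /=; last by rewrite comp_refl ?orbT ?(double_of_neq rxz).
  case: (eqVneq y y') => //= yy'; rewrite orbF; apply/negbTE/(ncomp_of_fixed z z' y y') => //.
  by move: eq_piece; rewrite /piece -rxy -rxz => -[par]; rewrite comp_sym addbC par addbC.
Qed.

Definition label := ('I_d.+1 * 'I_d.+1 * bool)%type.

Definition is_label (i : label) := ~~ i.2 || comp i.1.1 i.1.2.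

Definition label_rep (i : label) :=
  (base i.1.1, if i.2 then partner (base i.1.2) else base i.1.2).

Lemma piece_label_rep i : is_label i -> piece (label_rep i).1 (label_rep i).2 = i.
Proof.
case: i => [[a b] []]; rewrite /is_label /piece /= => lab;
  rewrite ?partner_cell !base_cell ?flip_base.
  by have /andP [_ db] := comp_double lab; rewrite lab flip_partner ?base_cell ?flip_base.
by rewrite andbF.
Qed.

Lemma is_label_piece y z : is_label (piece y z).
Proof. by rewrite /is_label /piece /=; case: comp; rewrite ?orbT ?andbF. Qed.

Lemma piece_eqE y z (i : label) : (piece y z == i) =
  [&& r x y == i.1.1, r x z == i.1.2 & comp (r x y) (r x z) && (flip y (+) flip z) == i.2].
Proof. by case: i => [[a b] t]; rewrite !xpair_eqE andbA. Qed.

Lemma card_is_label :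
  #|is_label| = (d.+1 ^ 2 + #|[set ab : 'I_d.+1 * 'I_d.+1 | comp ab.1 ab.2]|)%N.
Proof.
transitivity #|[set i | is_label i]|; first by apply: eq_card => i; rewrite inE.
rewrite (_ : [set i | is_label i] =
  setX setT [set false] :|: setX [set ab | comp ab.1 ab.2] [set true]).
  rewrite cardsU (_ : _ :&: _ = set0) ?cards0 ?subn0; last first.
    by apply/setP => [[ab []]]; rewrite !inE ?andbF.
  by rewrite !cardsX cardsT card_prod card_ord !cards1 !muln1 mulnn.
by apply/setP => [[[a b] []]]; rewrite !inE /is_label /= ?andbT ?andbF ?orbF.
Qed.

Lemma card_comp_pairs : #|[set ab : 'I_d.+1 * 'I_d.+1 | comp ab.1 ab.2]| =
  (#|[set ab | link ab.1 ab.2]| + #|[set ab | comp ab.1 ab.2 && ~~ link ab.1 ab.2]|)%N.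
Proof.
rewrite -cardsUI (_ : _ :&: _ = set0) ?cards0 ?addn0; last first.
  by apply/setP => ab; rewrite !inE; case: link; rewrite ?andbF.
apply: eq_card => ab; rewrite !inE.
by case: (boolP (link _ _)) => [/link_comp -> | _]; rewrite ?andbT.
Qed.

Section Matrices.
Variable F : fieldType.
Local Open Scope ring_scope.

Definition mxfun (f : X -> X -> F) : 'M[F]_#|X| :=
  \matrix_(i, j) f (enum_val i) (enum_val j).

Definition entry (M : 'M[F]_#|X|) y z := M (enum_rank y) (enum_rank z).

Lemma entry_mxfun f y z : entry (mxfun f) y z = f y z.
Proof. by rewrite /entry mxE !enum_rankK. Qed.

Lemma mxfun_entry M : mxfun (entry M) = M.
Proof. by apply/matrixP => i j; rewrite mxE /entry !enum_valK. Qed.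

Lemma eq_mxfun f g : f =2 g -> mxfun f = mxfun g.
Proof. by move=> fg; apply/matrixP => i j; rewrite !mxE fg. Qed.

Lemma mulmx_mxfun f g : mxfun f *m mxfun g = mxfun (fun y z => \sum_w f y w * g w z).
Proof.
apply/matrixP => i j; rewrite !mxE (reindex (@enum_rank X)) /=.
  by apply: eq_bigr => w _; rewrite !mxE enum_rankK.
by exists enum_val => w _; rewrite ?enum_valK ?enum_rankK.
Qed.

Lemma sum_mxfun (I : finType) (f : I -> X -> X -> F) :
  \sum_k mxfun (f k) = mxfun (fun y z => \sum_k f k y z).
Proof. by apply/matrixP => i j; rewrite summxE !mxE; apply: eq_bigr => k _; rewrite mxE. Qed.

Lemma sum_indicator (P : pred X) : \sum_w (P w)%:R = #|[set w | P w]|%:R :> F.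
Proof.
rewrite -sum1_card natr_sum [RHS]big_mkcond /=.
by apply: eq_bigr => w _; rewrite inE; case: (P w).
Qed.

Lemma adjA_mxfun a : adjA r F a = mxfun (fun y z => (r y z == a)%:R).
Proof. by []. Qed.

Lemma dualE_mxfun a : dualE r F x a = mxfun (fun y z => ((y == z) && (r x y == a))%:R).
Proof. by apply/matrixP => i j; rewrite !mxE (inj_eq enum_val_inj). Qed.

Lemma mulmx_dualE_mxfun a f :
  dualE r F x a *m mxfun f = mxfun (fun y z => (r x y == a)%:R * f y z).
Proof.
rewrite dualE_mxfun mulmx_mxfun; apply: eq_mxfun => y z.
rewrite (bigD1 y) //= big1 ?addr0 ?eqxx // => w /negbTE wy.
by rewrite eq_sym wy mul0r.
Qed.

Lemma mulmx_mxfun_dualE f b :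
  mxfun f *m dualE r F x b = mxfun (fun y z => f y z * (r x z == b)%:R).
Proof.
rewrite dualE_mxfun mulmx_mxfun; apply: eq_mxfun => y z.
rewrite (bigD1 z) //= big1 ?addr0 ?eqxx // => w /negbTE wz.
by rewrite wz mulr0.
Qed.

Definition piecewise (f : X -> X -> F) :=
  forall y z y' z', piece y z = piece y' z' -> f y z = f y' z'.

Lemma piecewise_mul f g : piecewise f -> piecewise g ->
  piecewise (fun y z => \sum_w f y w * g w z).
Proof.
move=> pf pg y z y' z' /swap_witness [C closedC [<- <-]].
have inv h : piecewise h -> forall u v, h (swap C u) (swap C v) = h u v.
  by move=> ph u v; apply: ph; apply: piece_swap.
by rewrite (sum_mul_invariant (inv_bij (swapK C)) (inv f pf) (inv g pg)).
Qed.

Lemma piecewise_mulmx M N : piecewise (entry M) -> piecewise (entry N) ->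
  piecewise (entry (M *m N)).
Proof.
move=> pM pN y z y' z' eq_p.
rewrite -[M]mxfun_entry -[N]mxfun_entry mulmx_mxfun !entry_mxfun.
exact: (piecewise_mul pM pN eq_p).
Qed.

Lemma entry_sum_scale (I : finType) (c : I -> F) (f : I -> 'M[F]_#|X|) y z :
  entry (\sum_k c k *: f k) y z = \sum_k c k * entry (f k) y z.
Proof. by rewrite /entry summxE; apply: eq_bigr => k _; rewrite mxE. Qed.

Definition piecemx (i : label) := mxfun (fun y z => (piece y z == i)%:R).

Definition piecemxs := [seq piecemx i | i <- enum is_label].

Lemma piecewise_memv M : piecewise (entry M) -> M \in <<piecemxs>>%VS.
Proof.
move=> pM.
have -> : M = \sum_(i | is_label i) entry M (label_rep i).1 (label_rep i).2 *: piecemx i.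
  apply/matrixP => p q; rewrite summxE -{1}[M]mxfun_entry !mxE.
  have rep := piece_label_rep (is_label_piece (enum_val p) (enum_val q)).
  rewrite (bigD1 (piece (enum_val p) (enum_val q))) ?is_label_piece // big1 /= => [|i /andP [_ ni]].
    by rewrite !mxE eqxx mulr1 addr0; apply/pM/esym.
  by rewrite !mxE eq_sym (negbTE ni) mulr0.
apply: memv_suml => i lab; apply/memvZ/memv_span/map_f.
by rewrite mem_enum.
Qed.

Lemma memv_piecewise M : M \in <<piecemxs>>%VS -> piecewise (entry M).
Proof.
move=> /(coord_span (X := in_tuple piecemxs)) -> y z y' z' eq_p.
rewrite !entry_sum_scale; apply: eq_bigr => k _; congr (_ * _).
have /mapP [i _ ->] : (in_tuple piecemxs)`_k \in piecemxs by apply: mem_nth.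
by rewrite !entry_mxfun eq_p.
Qed.

Lemma free_piecemxs : free piecemxs.
Proof.
apply/freeP => c sum0 k; set e := enum is_label; pose i0 : label := (ord0, ord0, false).
have size_e m : (m < #|is_label|)%N -> (m < size e)%N by rewrite /e -cardE.
have entry_nth m y z : (m < #|is_label|)%N ->
    entry piecemxs`_m y z = (piece y z == nth i0 e m)%:R.
  by move=> m_lt; rewrite (nth_map i0) ?size_e // entry_mxfun.
set i := nth i0 e k.
have lab : is_label i by have := mem_nth i0 (size_e _ (ltn_ord k)); rewrite mem_enum.
set y := (label_rep i).1; set z := (label_rep i).2.
have yz_i : piece y z = i := piece_label_rep lab.
move/(congr1 (fun M => entry M y z)): sum0; rewrite entry_sum_scale (bigD1 k) //= big1 => [|m mk].
  by rewrite entry_nth // yz_i eqxx mulr1 addr0 /entry mxE.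
rewrite entry_nth // yz_i nth_uniq ?size_e ?enum_uniq //.
by rewrite eq_sym (negbTE (mk : (m : nat) != k)) mulr0.
Qed.

Lemma dim_piecemxs : \dim <<piecemxs>> = #|is_label|.
Proof. by rewrite (eqP free_piecemxs) size_map -cardE. Qed.

Lemma piecewise_adjA a : piecewise (entry (adjA r F a)).
Proof. by move=> y z y' z' eq_p; rewrite adjA_mxfun !entry_mxfun (piece_r eq_p). Qed.

Lemma piecewise_dualE a : piecewise (entry (dualE r F x a)).
Proof.
move=> y z y' z' eq_p; rewrite dualE_mxfun !entry_mxfun (piece_eq eq_p).
by case: eq_p => ->.
Qed.

Lemma subalgebra_piecemxs : is_subalgebra <<piecemxs>>%VS.
Proof.
split=> [|M N /memv_piecewise pM /memv_piecewise pN]; apply: piecewise_memv.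
  by move=> y z y' z' eq_p; rewrite /entry !mxE !(inj_eq enum_rank_inj) (piece_eq eq_p).
exact: piecewise_mulmx.
Qed.

Definition blockmx a b := mxfun (fun y z => ((r x y == a) && (r x z == b))%:R).

Lemma blockmx_sum a b :
  blockmx a b = \sum_c dualE r F x a *m adjA r F c *m dualE r F x b.
Proof.
under eq_bigr do rewrite adjA_mxfun mulmx_dualE_mxfun mulmx_mxfun_dualE.
rewrite sum_mxfun; apply: eq_mxfun => y z; rewrite -mulr_suml -mulr_sumr.
rewrite (bigD1 (r y z)) //= eqxx big1 ?addr0 ?mulr1 -?natrM ?mulnb // => c /negbTE cyz.
by rewrite eq_sym cyz.
Qed.

Lemma piecemx_split a b : piecemx (a, b, false) + piecemx (a, b, true) = blockmx a b.
Proof.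
apply/matrixP => i j; rewrite !mxE !piece_eqE /=.
by case: (r x _ == a); case: (r x _ == b); case: (comp _ _ && _); rewrite /= ?addr0 ?add0r.
Qed.

Lemma piecemx_ncomp a b : ~~ comp a b -> piecemx (a, b, false) = blockmx a b.
Proof.
move=> nab; apply: eq_mxfun => y z; rewrite piece_eqE /=.
by case: eqP => [-> | //]; case: eqP => [-> | //]; rewrite (negbTE nab).
Qed.

Lemma piecemx_diag a : double a -> piecemx (a, a, false) = dualE r F x a.
Proof.
move=> da; rewrite dualE_mxfun; apply: eq_mxfun => y z; rewrite piece_eqE eq_cell_flipE /=.
case: (eqVneq (r x y) a) => [rxy | _]; last by rewrite andbF.
case: (eqVneq (r x z) a) => [rxz | rxz] /=; last by rewrite rxy eq_sym (negbTE rxz).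
by rewrite rxy rxz comp_refl // eqxx andbT; case: (_ (+) _).
Qed.

Lemma piecemx_link a b c : comp a b -> link b c ->
  piecemx (a, b, false) *m (dualE r F x b *m adjA r F (r (base b) (base c)) *m dualE r F x c)
  = piecemx (a, c, false).
Proof.
move=> ab bc; have ac := comp_trans ab (link_comp bc); have /andP [db _] := link_double bc.
rewrite adjA_mxfun mulmx_dualE_mxfun mulmx_mxfun_dualE mulmx_mxfun; apply: eq_mxfun => y z.
under eq_bigr do rewrite -!natrM !mulnb; rewrite sum_indicator piece_eqE /=.
case: (eqVneq (r x y) a) => [rxy | nya] /=; last first.
  rewrite (_ : [set w | _] = set0) ?cards0 //.
  by apply/setP => w; rewrite !inE piece_eqE (negbTE nya).
case: (eqVneq (r x z) c) => [rxz | nzc] /=; last first.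
  by rewrite (_ : [set w | _] = set0) ?cards0 //; apply/setP => w; rewrite !inE !andbF.
rewrite rxy rxz ac /=.
rewrite (_ : [set w | _] = [set w | (r x w == b) && ((flip w == flip y) && (flip w == flip z))]).
  rewrite (card_cell_pred _ (base_cell b)) flip_partner ?base_cell // db !flip_base.
  by case: (flip y); case: (flip z).
apply/setP => w; rewrite !inE piece_eqE rxy eqxx andbT /=.
case: (eqVneq (r x w) b) => [rxw | //]; rewrite rxw ab /=.
rewrite (link_parityE (y' := base b) (z' := base c)) ?rxw ?rxz ?base_cell // !flip_base.
by case: (flip y); case: (flip w); case: (flip z).
Qed.

Section Terwilliger.
Variable T : {vspace 'M[F]_#|X|}.
Hypothesis T_terwilliger : is_terwilliger_algebra r x T.

Lemma mulmx_memT M N : M \in T -> N \in T -> M *m N \in T.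
Proof. by case: T_terwilliger => [[_ T_mul] _ _ _]; apply: T_mul. Qed.

Lemma dualE_adjA_dualE_memT a b c : dualE r F x a *m adjA r F c *m dualE r F x b \in T.
Proof. by case: T_terwilliger => _ T_A T_E _; rewrite !mulmx_memT. Qed.

Lemma piecemx_comp_memT a b : comp a b -> piecemx (a, b, false) \in T.
Proof.
case/andP => da /connectP [p link_p ->] {b}.
elim/last_ind: p link_p => [_ | p c IHp]; first by rewrite piecemx_diag //; case: T_terwilliger.
rewrite rcons_path last_rcons => /andP [link_p lk].
have comp_ap : comp a (last a p) by rewrite /comp da; apply/connectP; exists p.
by rewrite -(piecemx_link comp_ap lk) mulmx_memT ?IHp ?dualE_adjA_dualE_memT.
Qed.

Lemma piecemx_memT i : is_label i -> piecemx i \in T.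
Proof.
have blockT a b : blockmx a b \in T.
  by rewrite blockmx_sum; apply: memv_suml => c _; apply: dualE_adjA_dualE_memT.
case: i => [[a b] t]; rewrite /is_label /=.
have [ab _ | nab] := boolP (comp a b); last by case: t => //= _; rewrite piecemx_ncomp.
case: t; last exact: piecemx_comp_memT.
rewrite -(addKr (piecemx (a, b, false)) (piecemx _)) piecemx_split.
by rewrite memvD ?memvN ?blockT ?piecemx_comp_memT.
Qed.

Lemma terwilliger_span : T = <<piecemxs>>%VS.
Proof.
apply/eqP; rewrite eqEsubv; apply/andP; split.
  case: T_terwilliger => _ _ _; apply; first exact: subalgebra_piecemxs.
    by move=> a; apply/piecewise_memv/piecewise_adjA.
  by move=> a; apply/piecewise_memv/piecewise_dualE.
apply/span_subvP => M /mapP [i]; rewrite mem_enum => lab ->.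
exact: piecemx_memT.
Qed.

End Terwilliger.

End Matrices.

End QuasiThin.

End Scheme.

Theorem theoremA (X : finType) (d : nat) (r : X -> X -> 'I_d.+1)
  (F : fieldType) (x : X) (T : {vspace 'M[F]_#|X|})
  (B : {set 'I_d.+1 * 'I_d.+1}) :
  is_scheme r -> quasi_thin r ->
  is_terwilliger_algebra r x T ->
  (forall ce : 'I_d.+1 * 'I_d.+1, ce \in B <-> bad_pair r ce.1 ce.2) ->
  \dim T = (d.+1 ^ 2
            + #|[set ab : 'I_d.+1 * 'I_d.+1 | #|cprod r (trI r ab.1) ab.2| == 2]|
            + #|B|)%N.
Proof.
move=> r_scheme r_qt T_terw B_bad.
rewrite (terwilliger_span r_scheme r_qt T_terw) (dim_piecemxs r_scheme x r_qt F).
rewrite (card_is_label r x) (card_comp_pairs r_scheme x r_qt) addnA.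
congr (_ + _ + _)%N; apply: eq_card => ab; rewrite !inE.
  by rewrite (card_cprod_trI r_scheme x r_qt) eqSS; case: link.
by apply/idP/idP => [/(bad_pairP r_scheme x r_qt) /B_bad | /B_bad /(bad_pairP r_scheme x r_qt)].
Qed.
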